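(* Let $S$ be a semigroup with finite $\mathcal{R}$-height, and let $B$ be a bi-ideal of $S$. Let $n$ be the maximum length of a chain of $\mathcal{R}$-classes of $S$ each of which intersects $B$. Then the $\mathcal{R}$-height of $B$ (regarded as a semigroup) satisfies $\mathrm{H}_{\mathcal{R}}(B)\leq 3n-1$.
   Context: For a semigroup $S$, $S^1$ denotes $S$ with an identity adjoined if necessary. Green's preorder on $S$: $a\leq_{\mathcal{R}} b$ iff $aS^1\subseteq bS^1$; $a\,\mathcal{R}\,b$ iff $a\leq_{\mathcal{R}} b$ and $b\leq_{\mathcal{R}} a$. The set of $\mathcal{R}$-classes is partially ordered by $R_a\leq R_b$ iff $a\leq_{\mathcal{R}} b$. The $\mathcal{R}$-height $\mathrm{H}_{\mathcal{R}}(S)$ is the supremum of the cardinalities (lengths) of chains in this poset. A bi-ideal of $S$ is a non-empty subset $B\subseteq S$ with $BS^1B\subseteq B$; in particular $B$ is a subsemigroup, and its $\mathcal{R}$-height is computed with respect to Green's relation $\mathcal{R}$ of the semigroup $B$ itself (i.e. $a\leq b$ in $B$ iff $aB^1\subseteq bB^1$). *)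

From Stdlib Require Import List Sorting.Sorted Arith.
Export ListNotations.

Record semigroup := Semigroup {
  carrier :> Type;
  mul : carrier -> carrier -> carrier;
  mulA : forall a b c, mul a (mul b c) = mul (mul a b) c
}.

Section Green.
Variable S : semigroup.

(* a P^1 : the set { a } ∪ { a s | s ∈ P }. With P = everything this is a S^1. *)
Definition rideal_in (P : S -> Prop) (a : S) : S -> Prop :=
  fun x => x = a \/ exists s, P s /\ x = mul S a s.

Definition leR_in (P : S -> Prop) (a b : S) : Prop :=
  forall x, rideal_in P a x -> rideal_in P b x.

Definition ltR_in (P : S -> Prop) (a b : S) : Prop :=
  leR_in P a b /\ ~ leR_in P b a.

Definition allS : S -> Prop := fun _ => True.

(* A chain of R-classes of the semigroup P, listed by representatives
   (all satisfying Q) in strictly decreasing order. A chain of k R-classes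
   (each meeting Q) corresponds exactly to such a list of length k. *)
Definition R_chain (P Q : S -> Prop) (l : list S) : Prop :=
  Sorted (fun x y => ltR_in P y x) l /\ Forall Q l.

(* H_R(P) <= m, for P a subsemigroup (Green's relation computed inside P). *)
Definition R_height_le (P : S -> Prop) (m : nat) : Prop :=
  forall l, R_chain P P l -> length l <= m.

Definition finite_R_height : Prop := exists m, R_height_le allS m.

(* bi-ideal: non-empty B with B S^1 B ⊆ B *)
Definition bi_ideal (B : S -> Prop) : Prop :=
  (exists b, B b) /\
  (forall b1 b2, B b1 -> B b2 -> B (mul S b1 b2)) /\
  (forall b1 s b2, B b1 -> B b2 -> B (mul S (mul S b1 s) b2)).

End Green.

From Stdlib Require Import List Lia Classical Sorting.Sorted Wf_nat.

(* Let x_1 >_B x_2 >_B ... >_B x_k be a chain of R-classes of B.  Writing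
   x_{i+1} = x_i c and x_{i+3} = x_{i+2} e with c, e in B, the relation
   x_i <=_R x_{i+3} in S would give x_{i+1} in x_{i+2} e S^1 c, which lies in
   x_{i+2} B because B S^1 B is contained in B; this contradicts
   x_{i+1} >_B x_{i+2}.  Hence x_1, x_4, x_7, ... is a chain of R-classes of S
   meeting B.  Appending one more element t of B to the B-chain before taking
   every third term gives a chain of length at least (k+1)/3, so k <= 3n - 1:
   either some t in B lies strictly R-below x_k in S, or x_k is R-minimal
   among the elements of B, and then t = x_k itself works, since x_k R x_k^2
   in S plays the role of x_{k+1} = x_k e above. *)

Section EveryThird.
Context {A : Type}.
Variable R : A -> A -> Prop.

Fixpoint every_third (l : list A) : list A :=
  match l with
  | x :: _ :: _ :: r => x :: every_third r
  | x :: _ => [x]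
  | [] => []
  end.

Definition related_three_apart (l : list A) : Prop :=
  forall p a b c d q, l = p ++ a :: b :: c :: d :: q -> R a d.

Lemma every_third_length (l : list A) : length l <= 3 * length (every_third l).
Proof.
  induction l as [l IH] using (induction_ltof1 _ (@length A)).
  destruct l as [|x [|y [|z r]]]; simpl; try lia.
  assert (Hr : ltof _ (@length A) r (x :: y :: z :: r)) by (unfold ltof; simpl; lia).
  specialize (IH r Hr). lia.
Qed.

Lemma every_third_incl (l : list A) : incl (every_third l) l.
Proof.
  induction l as [l IH] using (induction_ltof1 _ (@length A)).
  destruct l as [|x [|y [|z r]]]; simpl; try apply incl_refl.
  - intros u [<-|[]]. now left.
  - apply incl_cons; [now left|].
    do 3 apply incl_tl. apply IH. unfold ltof; simpl; lia.
Qed.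

Lemma every_third_Sorted (l : list A) :
  related_three_apart l -> Sorted R (every_third l).
Proof.
  induction l as [l IH] using (induction_ltof1 _ (@length A)).
  intros Hl. destruct l as [|x [|y [|z [|w r]]]]; try (simpl; now repeat constructor).
  change (Sorted R (x :: every_third (w :: r))). constructor.
  - apply IH; [unfold ltof; simpl; lia|].
    intros p a b c d q E. apply (Hl (x :: y :: z :: p) a b c d q). now rewrite E.
  - assert (Hxw : R x w) by exact (Hl [] x y z w r eq_refl).
    destruct r as [|? [|? [|? ?]]]; simpl; now constructor.
Qed.

Lemma related_three_apart_snoc (l : list A) (t : A) :
  related_three_apart l ->
  (forall p a b c, l = p ++ [a; b; c] -> R a t) ->
  related_three_apart (l ++ [t]).
Proof.
  intros Hl Hend p a b c d q E.
  destruct q as [|u q _] using rev_ind.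
  - replace (p ++ [a; b; c; d]) with ((p ++ [a; b; c]) ++ [d]) in E
      by now rewrite <- app_assoc.
    apply app_inj_tail in E as [-> ->]. now apply (Hend p a b c).
  - replace (p ++ a :: b :: c :: d :: q ++ [u])
      with ((p ++ a :: b :: c :: d :: q) ++ [u]) in E
      by now rewrite <- app_assoc.
    apply app_inj_tail in E as [-> _]. now apply (Hl p a b c d q).
Qed.

Lemma Sorted_app_r (p q : list A) : Sorted R (p ++ q) -> Sorted R q.
Proof.
  induction p as [|x p IH]; [easy|].
  intros H. apply IH. now apply Sorted_inv in H as [H _].
Qed.

End EveryThird.

Section Green.
Variable S : semigroup.

Lemma leR_in_refl (P : S -> Prop) (a : S) : leR_in S P a a.
Proof. now intros x Hx. Qed.

Lemma leR_in_trans (P : S -> Prop) (a b c : S) :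
  leR_in S P a b -> leR_in S P b c -> leR_in S P a c.
Proof. unfold leR_in; auto. Qed.

Lemma ltR_in_le_trans (P : S -> Prop) (a b c : S) :
  ltR_in S P a b -> leR_in S P b c -> ltR_in S P a c.
Proof.
  intros [Hab Hba] Hbc. split; [exact (leR_in_trans _ _ _ _ Hab Hbc)|].
  intros Hca. exact (Hba (leR_in_trans _ _ _ _ Hbc Hca)).
Qed.

Lemma leR_in_rideal (P : S -> Prop) (a b : S) :
  leR_in S P a b -> rideal_in S P b a.
Proof. intros H. apply H. now left. Qed.

Lemma rideal_in_leR (P : S -> Prop) (a b : S) :
  (forall x y, P x -> P y -> P (mul S x y)) ->
  rideal_in S P b a -> leR_in S P a b.
Proof.
  intros HP [->|[s [Hs ->]]] x [->|[t [Ht ->]]].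
  - now left.
  - right. now exists t.
  - right. now exists s.
  - right. exists (mul S s t). split; [auto|symmetry; apply mulA].
Qed.

Lemma mul_leR (a s : S) : leR_in S (allS S) (mul S a s) a.
Proof. apply rideal_in_leR; [easy|]. right. now exists s. Qed.

Lemma leR_in_allS (P : S -> Prop) (a b : S) :
  leR_in S P a b -> leR_in S (allS S) a b.
Proof.
  intros H. apply rideal_in_leR; [easy|].
  destruct (leR_in_rideal _ _ _ H) as [->|[s [_ ->]]]; [now left|].
  right. now exists s.
Qed.

Lemma ltR_in_mul (P : S -> Prop) (x y : S) :
  ltR_in S P y x -> exists c, P c /\ y = mul S x c.
Proof.
  intros [Hyx Hxy]. destruct (leR_in_rideal _ _ _ Hyx) as [->|H]; [|exact H].
  exfalso. apply Hxy, leR_in_refl.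
Qed.

Variables (B : S -> Prop) (hB : bi_ideal S B).

Notation leS := (leR_in S (allS S)).
Notation ltS := (ltR_in S (allS S)).
Notation leB := (leR_in S B).
Notation ltB := (ltR_in S B).

Lemma bi_ideal_leR (x z c e : S) :
  B c -> B e -> leS x (mul S z e) -> leB (mul S x c) z.
Proof.
  intros Hc He H. destruct hB as [_ [Hmul Hbsb]].
  apply rideal_in_leR; [exact Hmul|]. right.
  destruct (leR_in_rideal _ _ _ H) as [->|[s [_ ->]]].
  - exists (mul S e c). split; [auto|symmetry; apply mulA].
  - exists (mul S (mul S e s) c). split; [auto|now rewrite !mulA].
Qed.

Lemma ltS_three_apart (x y z t e : S) :
  B e -> ltB y x -> ltB z y -> leS t z -> leS t (mul S z e) -> ltS t x.
Proof.
  intros He Hyx Hzy Htz Htze.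
  destruct (ltR_in_mul _ _ _ Hyx) as [c [Hc ->]].
  split.
  - apply (leR_in_trans _ _ _ _ Htz), (leR_in_trans _ _ (mul S x c)).
    + exact (leR_in_allS _ _ _ (proj1 Hzy)).
    + apply mul_leR.
  - intros Hxt. apply (proj2 Hzy), (bi_ideal_leR _ _ _ e Hc He).
    exact (leR_in_trans _ _ _ _ Hxt Htze).
Qed.

Lemma B_chain_three_apart (l : list S) :
  Sorted (fun x y => ltB y x) l -> related_three_apart (fun x y => ltS y x) l.
Proof.
  intros Hl p a b c d q E. rewrite E in Hl. apply Sorted_app_r in Hl.
  apply Sorted_inv in Hl as [Hl Hba]. apply Sorted_inv in Hl as [Hl Hcb].
  apply Sorted_inv in Hl as [_ Hdc].
  apply HdRel_inv in Hba, Hcb, Hdc.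
  destruct (ltR_in_mul _ _ _ Hdc) as [e [He ->]].
  apply (ltS_three_apart a b c _ e He Hba Hcb); [|apply leR_in_refl].
  apply mul_leR.
Qed.

Lemma B_chain_snoc_three_apart (l : list S) (z t : S) :
  Sorted (fun x y => ltB y x) (l ++ [z]) ->
  (forall x y, ltB y x -> ltB z y -> ltS t x) ->
  related_three_apart (fun x y => ltS y x) ((l ++ [z]) ++ [t]).
Proof.
  intros Hl Ht. apply related_three_apart_snoc; [exact (B_chain_three_apart _ Hl)|].
  intros p a b c E.
  replace (p ++ [a; b; c]) with ((p ++ [a; b]) ++ [c]) in E
    by now rewrite <- app_assoc.
  pose proof E as Ez. apply app_inj_tail in Ez as [_ <-].
  rewrite E, <- app_assoc in Hl. apply Sorted_app_r in Hl.
  apply Sorted_inv in Hl as [Hl Hba]. apply Sorted_inv in Hl as [_ Hcb].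
  apply HdRel_inv in Hba, Hcb.
  exact (Ht a b Hba Hcb).
Qed.

Lemma exists_ltS_below_two_steps (z : S) :
  B z -> exists t, B t /\ forall x y, ltB y x -> ltB z y -> ltS t x.
Proof.
  intros Hz.
  destruct (classic (exists b, B b /\ ltS b z)) as [[b [Hb Hbz]]|Hmin].
  - exists b. split; [exact Hb|]. intros x y Hyx Hzy.
    apply (ltR_in_le_trans _ _ _ _ Hbz), (leR_in_trans _ _ y);
      apply (leR_in_allS B); [exact (proj1 Hzy)|exact (proj1 Hyx)].
  - assert (Hzz : leS z (mul S z z)).
    { apply NNPP. intros Hnot. apply Hmin. exists (mul S z z).
      split; [now apply hB|split; [apply mul_leR|exact Hnot]]. }
    exists z. split; [exact Hz|]. intros x y Hyx Hzy.
    exact (ltS_three_apart x y z z z Hz Hyx Hzy (leR_in_refl _ _) Hzz).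
Qed.

End Green.

Theorem theorem3p1 (S : semigroup) (B : S -> Prop) (n : nat)
  (hfin : finite_R_height S)
  (hB : bi_ideal S B)
  (hn_attained : exists l, R_chain S (allS S) B l /\ length l = n)
  (hn_max : forall l, R_chain S (allS S) B l -> length l <= n) :
  R_height_le S B (3 * n - 1).
Proof.
  intros l [Hs HBl].
  destruct l as [|z l _] using rev_ind; [simpl; lia|].
  assert (Hz : B z) by now apply Forall_app in HBl as [_ Hz]; inversion Hz.
  destruct (exists_ltS_below_two_steps S B hB z Hz) as [t [Ht Hend]].
  set (l' := (l ++ [z]) ++ [t]).
  assert (Hchain : R_chain S (allS S) B (every_third l')).
  { split.
    - apply every_third_Sorted, (B_chain_snoc_three_apart S B hB); assumption.
    - apply (incl_Forall (every_third_incl _)), Forall_app. split; auto. }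
  pose proof (every_third_length l') as Hlen.
  pose proof (hn_max _ Hchain). subst l'. rewrite !length_app in *. simpl in *. lia.
Qed.
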